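(* Assume $\|X\|/p\le\lambda\le4\|X\|\sqrt{\log p}$. For $p$ sufficiently large and any $\beta^*\in\mathbb R^p$ with support $S_*$ and $s_*=|S_*|$, almost surely \[ \int\Lambda_{n,\beta,\beta^*}(Y)\,d\Pi(\beta)\ge\frac{\pi_p(s_* )}{p^{2s_*}}e^{-\lambda\|\beta^*\|_1}e^{-1}. \]
   Context: $X$ is a deterministic real $n\times p$ matrix, $\|X\|=\max_i\|X_{\cdot,i}\|_2$ (max column norm), $Y\in\mathbb R^n$ the observation. $\Lambda_{n,\beta,\beta^*}(Y)=\exp\big(-\frac12\|X(\beta-\beta^* )\|_2^2+(Y-X\beta^* )^tX(\beta-\beta^* )\big)$. The prior $\Pi$ on $\mathbb R^p$: draw $s$ from a probability $\pi_p$ on $\{0,\dots,p\}$, then $S$ uniformly among subsets of size $s$, then $\beta_i$, $i\in S$, i.i.d. with Laplace density $x\mapsto\frac\lambda2e^{-\lambda|x|}$, and $\beta_i=0$ for $i\notin S$. *)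

From HB Require Import structures.
From mathcomp Require Import all_boot all_order all_algebra.
From mathcomp Require Import all_classical all_reals all_analysis.
Set Implicit Arguments. Unset Strict Implicit. Unset Printing Implicit Defensive.
Import Order.TTheory GRing.Theory Num.Theory.
Import numFieldNormedType.Exports.
Local Open Scope ring_scope.

Section Defs.
Variable R : realType.

Definition colnorm (n p : nat) (X : 'M[R]_(n, p)) : R :=
  \big[Num.max/0]_(i < p) Num.sqrt (\sum_(j < n) X j i ^+ 2).

Definition norm2sq (m : nat) (v : 'cV[R]_m) : R := \sum_(j < m) v j 0 ^+ 2.

Definition l1norm (m : nat) (v : 'cV[R]_m) : R := \sum_(j < m) `|v j 0|.

Definition supp (m : nat) (v : 'cV[R]_m) : {set 'I_m} := [set i | v i 0 != 0].
Definition ssize (m : nat) (v : 'cV[R]_m) : nat := #|supp v|.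

Definition Lambda (n p : nat) (X : 'M[R]_(n, p)) (Y : 'cV[R]_n)
    (bstar beta : 'cV[R]_p) : R :=
  expR (- (norm2sq (X *m (beta - bstar))) / 2
        + ((Y - X *m bstar)^T *m (X *m (beta - bstar))) 0 0).

Definition upd (p : nat) (beta : 'cV[R]_p) (i : 'I_p) (x : R) : 'cV[R]_p :=
  \col_j (if j == i then x else beta j 0).

Definition laplace_dens (lam x : R) : R := lam / 2 * expR (- (lam * `|x|)).

Definition laplace_int (lam : R) (f : R -> \bar R) : \bar R :=
  (\int[@lebesgue_measure R]_(x in [set: R]) ((laplace_dens lam x)%:E * f x))%E.

(* integral of a nonnegative f against the law of beta, where beta_i, i in s,
   are i.i.d. Laplace(lam) and the other coordinates equal those of beta0
   (iterated integration, one coordinate of s at a time; by Tonelli this is the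
   integral against the product measure for nonnegative measurable f). *)
Fixpoint slab_int (p : nat) (lam : R) (s : seq 'I_p)
    (f : 'cV[R]_p -> \bar R) (beta0 : 'cV[R]_p) : \bar R :=
  match s with
  | [::] => f beta0
  | i :: s' => laplace_int lam (fun x => slab_int lam s' f (upd beta0 i x))
  end.

(* integral of a nonnegative f against the prior Pi: s ~ pi_p, S uniform among
   subsets of size s, beta_i (i in S) iid Laplace(lam), beta_i = 0 otherwise *)
Definition prior_int (p : nat) (lam : R) (pi : nat -> R)
    (f : 'cV[R]_p -> \bar R) : \bar R :=
  (\sum_(s < p.+1)
     (pi s / ('C(p, s))%:R)%:E *
       \sum_(S : {set 'I_p} | #|S| == s) slab_int lam (enum S) f 0)%E.

End Defs.

(* Keep only the summand s = s_*, S = S_* of the prior and, inside it, only the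
   l1-ball of radius rho = 1/(lam p) around beta* in the coordinates of S_*.
   With d = beta - beta* there ||X d||_2 <= ||X|| ||d||_1 <= 1 because
   ||X||/p <= lam, so Lambda >= e^{-1/2} e^{<a, d>} with a = X^T (Y - X beta* ),
   while each Laplace density is at least its value at beta*_i times
   e^{-lam |d_i|}.
   Integrating out one coordinate x at a time, the rest of the ball has radius
   u - |x - c|, so the integrand is a tilted tent K e^{a(x - c)} (u - |x - c|)^k;
   since e^t + e^{-t} >= 2 the tilt only increases its integral, and the ball
   contributes at least its volume (2 rho)^s / s!.  Finally
   (lam/2)^s (2 rho)^s = p^{-s}, C(p, s) s! <= p^s and e^{-1/2} e^{-1/p} >= e^{-1}. *)

From HB Require Import structures.
From mathcomp Require Import all_boot all_order all_algebra.
From mathcomp Require Import all_classical all_reals all_analysis.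
From mathcomp Require Import measurable_realfun lra ring.
Set Implicit Arguments. Unset Strict Implicit. Unset Printing Implicit Defensive.
Import Order.TTheory GRing.Theory Num.Theory.
Import numFieldNormedType.Exports.
Local Open Scope ring_scope.

Section tent_integral.
Variable R : realType.
Local Notation mu := (@lebesgue_measure R).

Lemma continuous_shifted_pow (K u c : R) (k : nat) :
  continuous (fun x => K * (u - (x - c)) ^+ k).
Proof.
move=> x; apply: cvgM; first exact: cvg_cst.
apply: (@continuous_comp _ _ _ (fun x => u - (x - c)) (fun y => y ^+ k)).
  by apply: cvgB; [exact: cvg_cst | apply: cvgB; [exact: cvg_id | exact: cvg_cst]].
exact: exprn_continuous.
Qed.

Lemma integral_itv_shifted_pow (K u c : R) (k : nat) : 0 < u ->
  (\int[mu]_(x in `[c, (c + u)%R]) (K * (u - (x - c)) ^+ k)%:E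
    = (K * u ^+ k.+1 / k.+1%:R)%:E)%E.
Proof.
move=> u_gt0.
pose F (y : R) : R := - (K / k.+1%:R) * (u - (y - c)) ^+ k.+1.
have F_deriv (x : R) : is_derive x (1 : R) F (K * (u - (x - c)) ^+ k).
  have -> : F = (- (K / k.+1%:R)) *: (cst u - (id - cst c)) ^+ k.+1.
    by apply/funext => y; rewrite scalrfctE exprfctE.
  apply: is_derive_eq.
  rewrite /= sub0r subr0 !fctE /= /GRing.scale /= mulrN1 !mulrN mulNr opprK.
  by rewrite mulrA divfK // pnatr_eq0.
have F_cont : continuous F.
  move=> x; apply/differentiable_continuous/derivable1_diffP.
  exact: (@ex_derive _ _ _ _ _ _ _ (F_deriv x)).
rewrite (@continuous_FTC2 _ _ F); last 4 first.
- by rewrite ltrDl.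
- exact/continuous_subspaceT/continuous_shifted_pow.
- split; first by move=> x _; exact: (@ex_derive _ _ _ _ _ _ _ (F_deriv x)).
  + exact/cvg_at_right_filter/F_cont.
  + exact/cvg_at_left_filter/F_cont.
- by move=> x _; rewrite derive1E (@derive_val _ _ _ _ _ _ _ (F_deriv x)).
rewrite /F -EFinB; congr (EFin _).
by rewrite addrAC subrr add0r subrr subr0 expr0n /= mulr0 sub0r mulNr opprK mulrAC.
Qed.

Definition tilted_tent (K a c u : R) (k : nat) (x : R) : R :=
  K * expR (a * (x - c)) * (u - `|x - c|) ^+ k.

Lemma continuous_tilted_tent K a c u k : continuous (tilted_tent K a c u k).
Proof.
have shift_cont : continuous (fun x : R => x - c).
  by move=> x; apply: cvgB; [exact: cvg_id | exact: cvg_cst].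
move=> x; apply: cvgM; first apply: cvgM; first exact: cvg_cst.
- apply: (@continuous_comp _ _ _ (fun x => a * (x - c)) expR).
    by apply: cvgM; [exact: cvg_cst | exact: shift_cont].
  exact: continuous_expR.
- apply: (@continuous_comp _ _ _ (fun x => u - `|x - c|) (fun y => y ^+ k)).
    apply: cvgB; first exact: cvg_cst.
    apply: (@continuous_comp _ _ _ (fun x => x - c) (fun y => `|y|)); first exact: shift_cont.
    exact: norm_continuous.
  exact: exprn_continuous.
Qed.

Lemma measurable_tilted_tent K a c u k (D : set R) :
  measurable_fun D (EFin \o tilted_tent K a c u k).
Proof.
apply/measurable_EFinP/measurable_funTS.
apply: continuous_measurable_fun; exact: continuous_tilted_tent.
Qed.

Lemma tilted_tent_ge0 K a c u k x :
  0 <= K -> `|x - c| <= u -> 0 <= tilted_tent K a c u k x.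
Proof.
move=> K_ge0 xcu; rewrite /tilted_tent.
by rewrite !mulr_ge0 ?expR_ge0 ?exprn_ge0 ?subr_ge0.
Qed.

Lemma expR_add_expRN_ge2 (t : R) : 2 <= expR t + expR (- t).
Proof. by have := expR_ge1Dx t; have := expR_ge1Dx (- t); lra. Qed.

Lemma integral_tilted_tent_reflect K a c u k : 0 < u ->
  (\int[mu]_(x in `[(c - u)%R, c]) (tilted_tent K a c u k x)%:E
    = \int[mu]_(x in `[c, (c + u)%R]) (tilted_tent K (- a) c u k x)%:E)%E.
Proof.
move=> u_gt0.
pose refl (x : R) : R := 2 * c - x.
have refl_deriv (x : R) : is_derive x (1 : R) refl (-1).
  by rewrite /refl (_ : (fun x => 2 * c - x) = cst (2 * c) - id) //; apply: is_derive_eq; rewrite sub0r.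
have refl'E : refl^`()%classic = cst (-1).
  by apply/funext => x; rewrite derive1E (@derive_val _ _ _ _ _ _ _ (refl_deriv x)).
have refl_cont : continuous refl.
  by move=> x; apply: cvgB; [exact: cvg_cst | exact: cvg_id].
have := @integration_by_substitution_decreasing R refl (tilted_tent K a c u k) c (c + u).
rewrite /refl (_ : 2 * c - (c + u) = c - u); last by lra.
rewrite (_ : 2 * c - c = c); last by lra.
move=> ->; rewrite -/refl ?refl'E.
- apply: eq_integral => x _; congr (EFin _).
  rewrite !fctE opprK mulr1 /= /tilted_tent /refl (_ : 2 * c - x - c = - (x - c)) ?normrN; last by lra.
  by rewrite mulrN mulNr.
- by lra.
- by move=> x y _ _ xy; rewrite /refl; lra.
- by move=> x _; exact: cvg_cst.
- exact: is_cvg_cst.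
- exact: is_cvg_cst.
- split; first by move=> x _; exact: (@ex_derive _ _ _ _ _ _ _ (refl_deriv x)).
  + exact/cvg_at_right_filter/refl_cont.
  + exact/cvg_at_left_filter/refl_cont.
- exact/continuous_subspaceT/continuous_tilted_tent.
Qed.

Lemma integral_tilted_tent_ge K a c u k : 0 <= K -> 0 < u ->
  ((2 * K * u ^+ k.+1 / k.+1%:R)%:E
    <= \int[mu]_(x in `[(c - u)%R, (c + u)%R]) (tilted_tent K a c u k x)%:E)%E.
Proof.
move=> K_ge0 u_gt0.
have tent_ge0 b (x : R) : c - u <= x -> x <= c + u ->
    (0 <= (tilted_tent K b c u k x)%:E)%E.
  by move=> ? ?; rewrite lee_fin tilted_tent_ge0 // ler_norml; lra.
rewrite (@itv_bndbnd_setU _ _ (BLeft (c - u)) (BLeft c) (BRight (c + u))); last 2 first.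
- by rewrite bnd_simp; lra.
- by rewrite bnd_simp; lra.
rewrite ge0_integral_setU //=; last 3 first.
- exact: measurable_tilted_tent.
- by move=> x [|] /=; rewrite in_itv /= => /andP[? ?]; apply: tent_ge0; lra.
- rewrite disj_set2E; apply/eqP/seteqP; split => x //=.
  by rewrite !in_itv /= => -[/andP[_ ?] /andP[? _]]; lra.
rewrite integral_itv_bndo_bndc; last exact: measurable_tilted_tent.
(* Reflecting the left half about [c] pairs [e^{a(x - c)}] with [e^{-a(x - c)}]. *)
rewrite integral_tilted_tent_reflect // -ge0_integralD //; last 4 first.
- by move=> x; rewrite /= in_itv /= => /andP[? ?]; apply: tent_ge0; lra.
- exact: measurable_tilted_tent.
- by move=> x; rewrite /= in_itv /= => /andP[? ?]; apply: tent_ge0; lra.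
- exact: measurable_tilted_tent.
rewrite -(@integral_itv_shifted_pow (2 * K) _ c) //.
apply: ge0_le_integral => //.
- move=> x; rewrite /= in_itv /= => /andP[? ?].
  by rewrite lee_fin mulr_ge0 ?exprn_ge0 //; lra.
- apply/measurable_EFinP/measurable_funTS; apply: continuous_measurable_fun.
  exact: continuous_shifted_pow.
- by apply: emeasurable_funD; exact: measurable_tilted_tent.
move=> x; rewrite /= in_itv /= => /andP[? ?]; rewrite -EFinD lee_fin /tilted_tent.
rewrite ger0_norm; last by lra.
have := expR_add_expRN_ge2 (a * (x - c)); rewrite -mulNr => expR_sum_ge2.
rewrite -mulrDl -mulrDr [2 * K]mulrC.
by rewrite ler_wpM2r ?exprn_ge0 ?ler_wpM2l //; lra.
Qed.

(* Needed because the inner integrals of [slab_int] are not known to be measurable. *)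
Lemma ge0_le_integralT (f g : R -> \bar R) :
  (forall x, 0 <= f x)%E -> (forall x, f x <= g x)%E ->
  (\int[mu]_x f x <= \int[mu]_x g x)%E.
Proof.
move=> f_ge0 f_le_g.
rewrite !ge0_integralTE //; last by move=> x; apply: le_trans (f_le_g x).
by apply: ereal_sup_le => _ [h hf <-]; exists h => //= x; apply: le_trans (f_le_g x).
Qed.

End tent_integral.

Section laplace_slab.
Variables (R : realType) (lam : R).
Hypothesis lam_gt0 : 0 < lam.
Local Notation mu := (@lebesgue_measure R).

Lemma laplace_dens_ge0 x : 0 <= laplace_dens lam x.
Proof. by rewrite /laplace_dens mulr_ge0 ?expR_ge0 ?divr_ge0 // ltW. Qed.

Lemma laplace_dens_shift_ge c x :
  laplace_dens lam c * expR (- (lam * `|x - c|)) <= laplace_dens lam x.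
Proof.
rewrite /laplace_dens -mulrA ler_wpM2l ?divr_ge0 ?(ltW lam_gt0) //.
rewrite -expRD ler_expR -opprD -mulrDr lerN2 ler_wpM2l ?(ltW lam_gt0) //.
by rewrite -[x in `|x|](subrK c) addrC ler_normD.
Qed.

Lemma laplace_int_ge_tent (g : R -> \bar R) (K a c u : R) (k : nat) :
  0 <= K -> 0 <= u -> (forall x, 0 <= g x)%E ->
  (forall x, `|x - c| <= u ->
     ((K * expR (lam * `|x - c|) * expR (a * (x - c)) * (u - `|x - c|) ^+ k)%:E
       <= g x)%E) ->
  ((laplace_dens lam c * (2 * K * u ^+ k.+1 / k.+1%:R))%:E
    <= laplace_int lam g)%E.
Proof.
move=> K_ge0 u_ge0 g_ge0 g_ge.
have [->|u_gt0] := eqVneq u 0.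
  rewrite expr0n /= !(mulr0, mul0r); apply: integral_ge0 => x _.
  by rewrite mule_ge0 ?lee_fin ?laplace_dens_ge0.
have {}u_gt0 : 0 < u by rewrite lt_def u_gt0.
set Kc := laplace_dens lam c * K.
pose h x := if `|x - c| <= u then tilted_tent Kc a c u k x else 0.
have h_ge0 x : (0 <= (h x)%:E)%E.
  by rewrite /h lee_fin; case: ifP => // ?; rewrite tilted_tent_ge0 // mulr_ge0 ?laplace_dens_ge0.
have h_le x : ((h x)%:E <= (laplace_dens lam x)%:E * g x)%E.
  rewrite /h; case: ifP => [xcu|_]; last by rewrite mule_ge0 ?lee_fin ?laplace_dens_ge0.
  apply: le_trans (lee_wpmul2l _ (g_ge x xcu)); last by rewrite lee_fin laplace_dens_ge0.
  rewrite -EFinM lee_fin /tilted_tent.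
  have -> : Kc * expR (a * (x - c)) * (u - `|x - c|) ^+ k =
      laplace_dens lam c * expR (- (lam * `|x - c|)) *
      (K * expR (lam * `|x - c|) * expR (a * (x - c)) * (u - `|x - c|) ^+ k).
    have expRNK : expR (- (lam * `|x - c|)) * expR (lam * `|x - c|) = 1.
      by rewrite -expRD addNr expR0.
    by rewrite /Kc -[LHS]mulr1 -expRNK; ring.
  by rewrite ler_wpM2r ?laplace_dens_shift_ge // !mulr_ge0 ?expR_ge0 ?exprn_ge0 ?subr_ge0.
rewrite /laplace_int; apply: le_trans _ (ge0_le_integralT h_ge0 h_le).
rewrite (_ : laplace_dens lam c * _ = 2 * Kc * u ^+ k.+1 / k.+1%:R); last by rewrite /Kc; ring.
have Kc_ge0 : 0 <= Kc by rewrite mulr_ge0 ?laplace_dens_ge0.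
apply: le_trans (integral_tilted_tent_ge a c k Kc_ge0 u_gt0) _.
suff -> : (\int[mu]_(x in `[(c - u)%R, (c + u)%R]) (tilted_tent Kc a c u k x)%:E
    = \int[mu]_x (h x)%:E)%E by [].
rewrite integral_mkcond; apply: eq_integral => x _; rewrite /h /patch.
rewrite (_ : (x \in _) = (`|x - c| <= u)); first by case: ifP.
apply/idP/idP => [/set_mem|?]; first by rewrite /= in_itv /= ler_distl.
by apply: mem_set; rewrite /= in_itv /= -ler_distl.
Qed.

Lemma slab_int_ge0 p (s : seq 'I_p) (f : 'cV[R]_p -> \bar R) b :
  (forall y, 0 <= f y)%E -> (0 <= slab_int lam s f b)%E.
Proof.
move=> f_ge0; elim: s b => [|i s IH] b /=; first exact: f_ge0.
by apply: integral_ge0 => x _; rewrite mule_ge0 ?lee_fin ?laplace_dens_ge0.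
Qed.

Lemma slab_int_ge_l1ball p (bstar : 'cV[R]_p) (a : 'I_p -> R) (s : seq 'I_p) :
  uniq s -> forall (f : 'cV[R]_p -> \bar R) (b0 : 'cV[R]_p) (M u : R),
  0 <= M -> 0 <= u -> (forall y, 0 <= f y)%E ->
  (forall y : 'cV[R]_p, (forall j, j \notin s -> y j 0 = b0 j 0) ->
     \sum_(i <- s) `|y i 0 - bstar i 0| <= u ->
     ((M * expR (\sum_(i <- s) a i * (y i 0 - bstar i 0)))%:E <= f y)%E) ->
  ((M * \prod_(i <- s) laplace_dens lam (bstar i 0) * expR (- (lam * u))
     * ((2 * u) ^+ size s / (size s)`!%:R))%:E <= slab_int lam s f b0)%E.
Proof.
elim: s => [|i s IH] /=.
  move=> _ f b0 M u M_ge0 u_ge0 _ f_ge.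
  apply: le_trans (f_ge b0 (fun _ _ => erefl) _); last by rewrite big_nil.
  rewrite !big_nil expR0 expr0 fact0 divr1 !mulr1 lee_fin ler_piMr //.
  by rewrite expR_le1 oppr_le0 mulr_ge0 // ltW.
move=> /andP[i_notin_s s_uniq] f b0 M u M_ge0 u_ge0 f_ge0 f_ge.
set c := bstar i 0; set k := size s.
set P := \prod_(j <- s) laplace_dens lam (bstar j 0).
have P_ge0 : 0 <= P by apply: prodr_ge0 => j _; exact: laplace_dens_ge0.
set K := M * P * expR (- (lam * u)) * (2 ^+ k / k`!%:R).
have K_ge0 : 0 <= K by rewrite !mulr_ge0 ?expR_ge0 ?exprn_ge0 ?invr_ge0.
rewrite (_ : M * _ * _ * _ = laplace_dens lam c * (2 * K * u ^+ k.+1 / k.+1%:R)); last first.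
  by rewrite big_cons /K factS natrM exprMn exprS invfM -/P -/c; ring.
apply: (laplace_int_ge_tent (a := a i)) => // [x|x xcu]; first exact: slab_int_ge0.
set t := `|x - c|.
rewrite (_ : K * _ * _ * _ = M * expR (a i * (x - c)) * P * expR (- (lam * (u - t)))
                               * ((2 * (u - t)) ^+ k / k`!%:R)); last first.
  rewrite (_ : expR (- (lam * (u - t))) = expR (- (lam * u)) * expR (lam * t)).
    by rewrite /K exprMn; ring.
  by rewrite -expRD; congr expR; ring.
apply: IH => //; first by rewrite mulr_ge0 ?expR_ge0.
  by rewrite subr_ge0.
move=> y y_off y_l1.
have y_i : y i 0 = x by rewrite y_off // mxE eqxx.
have y_off' j : j \notin i :: s -> y j 0 = b0 j 0.
  rewrite in_cons negb_or => /andP[j_neq_i j_notin_s].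
  by rewrite y_off // mxE (negbTE j_neq_i).
have y_l1' : \sum_(j <- i :: s) `|y j 0 - bstar j 0| <= u.
  by rewrite big_cons y_i -/c -/t; lra.
by move: (f_ge y y_off' y_l1'); rewrite big_cons y_i expRD mulrA.
Qed.

End laplace_slab.

Section design_bounds.
Variable R : realType.

Lemma sqr_wsum_le (m : nat) (w y : 'I_m -> R) : (forall i, 0 <= w i) ->
  (\sum_i w i * y i) ^+ 2 <= (\sum_i w i) * (\sum_i w i * y i ^+ 2).
Proof.
move=> w_ge0.
have sqrE : (\sum_i w i * y i) ^+ 2 = \sum_i \sum_k (w i * y i) * (w k * y k).
  by rewrite expr2 mulr_suml; apply: eq_bigr => i _; rewrite mulr_sumr.
have prodE : (\sum_i w i) * (\sum_i w i * y i ^+ 2) =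
    \sum_i \sum_k w i * (w k * y k ^+ 2).
  by rewrite mulr_suml; apply: eq_bigr => i _; rewrite mulr_sumr.
have prodE' : (\sum_i w i) * (\sum_i w i * y i ^+ 2) =
    \sum_i \sum_k w i * w k * y i ^+ 2.
  rewrite prodE exchange_big /=; apply: eq_bigr => i _; apply: eq_bigr => k _.
  by ring.
(* [2 y_i y_k <= y_i^2 + y_k^2], weighted by [w_i w_k] and summed *)
have : 2 * (\sum_i \sum_k (w i * y i) * (w k * y k)) <=
   \sum_i \sum_k w i * (w k * y k ^+ 2) + \sum_i \sum_k w i * w k * y i ^+ 2.
  rewrite mulr_sumr -big_split /=; apply: ler_sum => i _.
  rewrite mulr_sumr -big_split /=; apply: ler_sum => k _.
  by have := sqr_ge0 (y i - y k); have := mulr_ge0 (w_ge0 i) (w_ge0 k); nra.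
by rewrite -prodE -prodE' sqrE; lra.
Qed.

Lemma sum_enum_supp p (S : {set 'I_p}) (F : 'I_p -> R) :
  (forall i, i \notin S -> F i = 0) -> \sum_i F i = \sum_(i <- enum S) F i.
Proof. by move=> F_off; rewrite big_enum /= [RHS]big_rmcond. Qed.

Lemma colnorm_ge0 n p (X : 'M[R]_(n, p)) : 0 <= colnorm X.
Proof.
by rewrite /colnorm; elim/big_rec: _ => // i x _ x_ge0; rewrite le_max x_ge0 orbT.
Qed.

Lemma col_sumsq_le_colnorm n p (X : 'M[R]_(n, p)) i :
  \sum_j X j i ^+ 2 <= colnorm X ^+ 2.
Proof.
have sumsq_ge0 : 0 <= \sum_j X j i ^+ 2 by apply: sumr_ge0 => j _; exact: sqr_ge0.
rewrite -(sqr_sqrtr sumsq_ge0) ler_pXn2r ?nnegrE ?sqrtr_ge0 ?colnorm_ge0 //.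
exact: (le_bigmax 0 (fun i => Num.sqrt (\sum_j X j i ^+ 2)) i).
Qed.

Lemma norm2sq_mulmx_le n p (X : 'M[R]_(n, p)) (d : 'cV[R]_p) :
  norm2sq (X *m d) <= colnorm X ^+ 2 * l1norm d ^+ 2.
Proof.
set c := colnorm X; set W := l1norm d.
have W_ge0 : 0 <= W by apply: sumr_ge0 => i _.
have row_le j : (X *m d) j 0 ^+ 2 <= W * \sum_i `|d i 0| * X j i ^+ 2.
  apply: le_trans (_ : (\sum_i `|d i 0| * `|X j i|) ^+ 2 <= _); last first.
    by under [X in _ * X]eq_bigr do rewrite -[X _ _ ^+ 2]real_normK ?num_real //; exact: sqr_wsum_le.
  rewrite mxE -real_normK ?num_real // ler_pXn2r ?nnegrE ?sumr_ge0 //.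
  apply: le_trans (ler_norm_sum _ _ _) _; apply: ler_sum => i _.
  by rewrite normrM mulrC.
apply: le_trans (ler_sum _ (fun j _ => row_le j)) _.
rewrite -mulr_sumr exchange_big /=.
have : \sum_i \sum_j `|d i 0| * X j i ^+ 2 <= c ^+ 2 * W.
  rewrite /W /l1norm mulr_sumr; apply: ler_sum => i _.
  by rewrite -mulr_sumr mulrC ler_wpM2r ?col_sumsq_le_colnorm.
by move/(ler_wpM2l W_ge0); rewrite mulrCA -expr2.
Qed.

Lemma Lambda_ge n p (X : 'M[R]_(n, p)) (Y : 'cV[R]_n) (bstar beta : 'cV[R]_p) :
  expR (- (colnorm X ^+ 2 * l1norm (beta - bstar) ^+ 2) / 2
        + ((Y - X *m bstar)^T *m X *m (beta - bstar)) 0 0)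
  <= Lambda X Y bstar beta.
Proof.
rewrite /Lambda ler_expR -mulmxA lerD2r.
by have := norm2sq_mulmx_le X (beta - bstar); lra.
Qed.

Lemma Lambda_ge_l1ball n p (X : 'M[R]_(n, p)) (Y : 'cV[R]_n) (bstar y : 'cV[R]_p)
    (S : {set 'I_p}) (rho : R) :
  (forall i, i \notin S -> y i 0 = bstar i 0) ->
  \sum_(i <- enum S) `|y i 0 - bstar i 0| <= rho ->
  expR (- (colnorm X ^+ 2 * rho ^+ 2 / 2))
    * expR (\sum_(i <- enum S) ((Y - X *m bstar)^T *m X) 0 i * (y i 0 - bstar i 0))
  <= Lambda X Y bstar y.
Proof.
move=> y_off y_l1; rewrite -expRD; apply: le_trans (Lambda_ge X Y bstar y).
have d_off i : i \notin S -> (y - bstar) i 0 = 0 by move=> /y_off; rewrite !mxE => ->; rewrite subrr.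
have l1E : l1norm (y - bstar) = \sum_(i <- enum S) `|y i 0 - bstar i 0|.
  rewrite /l1norm (sum_enum_supp (S := S)) => [|i /d_off ->]; last exact: normr0.
  by apply: eq_bigr => i _; rewrite !mxE.
have linE : ((Y - X *m bstar)^T *m X *m (y - bstar)) 0 0
    = \sum_(i <- enum S) ((Y - X *m bstar)^T *m X) 0 i * (y i 0 - bstar i 0).
  rewrite mxE (sum_enum_supp (S := S)) => [|i /d_off ->]; last exact: mulr0.
  by apply: eq_bigr => i _; congr (_ * _); rewrite !mxE.
rewrite ler_expR l1E linE lerD2r.
have l1_ge0 : 0 <= \sum_(i <- enum S) `|y i 0 - bstar i 0| by rewrite sumr_ge0.
have : (\sum_(i <- enum S) `|y i 0 - bstar i 0|) ^+ 2 <= rho ^+ 2.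
  by rewrite ler_pXn2r ?nnegrE // (le_trans l1_ge0).
by have := sqr_ge0 (colnorm X); nra.
Qed.

End design_bounds.

Section prior_lower_bound.
Variables (R : realType) (p : nat) (lam : R).
Hypothesis lam_gt0 : 0 < lam.

Lemma prior_int_ge_slab (pi : nat -> R) (f : 'cV[R]_p -> \bar R) (S : {set 'I_p}) :
  (forall s, (s <= p)%N -> 0 <= pi s) -> (forall y, 0 <= f y)%E ->
  ((pi #|S| / 'C(p, #|S|)%:R)%:E * slab_int lam (enum S) f 0
    <= prior_int lam pi f)%E.
Proof.
move=> pi_ge0 f_ge0.
have S_le : (#|S| < p.+1)%N by rewrite ltnS -[p in (_ <= p)%N]card_ord max_card.
have weight_ge0 (s : 'I_p.+1) : (0 <= (pi s / 'C(p, s)%:R)%:E)%E.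
  by rewrite lee_fin divr_ge0 ?pi_ge0 // -ltnS.
have slabs_ge0 s : (0 <= \sum_(S' : {set 'I_p} | #|S'| == s) slab_int lam (enum S') f 0)%E.
  by apply: sume_ge0 => S' _; exact: slab_int_ge0.
rewrite /prior_int (bigD1 (Ordinal S_le)) //= -[leLHS]adde0.
apply: leeD; last by apply: sume_ge0 => s _; rewrite mule_ge0.
apply: lee_wpmul2l; first exact: (weight_ge0 (Ordinal S_le)).
rewrite (bigD1 S) //= -[leLHS]adde0; apply: leeD => //.
by apply: sume_ge0 => S' _; exact: slab_int_ge0.
Qed.

End prior_lower_bound.

Lemma ffact_leq_expn m k : (m ^_ k <= m ^ k)%N.
Proof.
rewrite ffact_prod -[k in (_ <= _ ^ k)%N]card_ord -prod_nat_const.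
by apply: leq_prod => i _; exact: leq_subr.
Qed.

Section likelihood_prior.
Variable R : realType.

Lemma prod_laplace_dens_supp p (lam : R) (bstar : 'cV[R]_p) :
  \prod_(i <- enum (supp bstar)) laplace_dens lam (bstar i 0)
  = (lam / 2) ^+ ssize bstar * expR (- (lam * l1norm bstar)).
Proof.
rewrite big_split /= !big_enum /= prodr_const -expR_sum; congr (_ * expR _).
rewrite /l1norm (@sum_enum_supp _ _ (supp bstar)); last first.
  by move=> i; rewrite inE negbK => /eqP ->; rewrite normr0.
by rewrite big_enum /= mulr_sumr -sumrN.
Qed.

Lemma prior_int_Lambda_ge n p (X : 'M[R]_(n, p)) (Y : 'cV[R]_n)
    (bstar : 'cV[R]_p) (lam rho : R) (pi : nat -> R) :
  0 < lam -> 0 <= rho -> (forall s, (s <= p)%N -> 0 <= pi s) ->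
  ((pi (ssize bstar) / 'C(p, ssize bstar)%:R
     * (expR (- (colnorm X ^+ 2 * rho ^+ 2 / 2))
        * ((lam / 2) ^+ ssize bstar * expR (- (lam * l1norm bstar)))
        * expR (- (lam * rho)) * ((2 * rho) ^+ ssize bstar / (ssize bstar)`!%:R)))%:E
   <= prior_int lam pi (fun beta => (Lambda X Y bstar beta)%:E))%E.
Proof.
move=> lam_gt0 rho_ge0 pi_ge0.
set S := supp bstar.
have s_le : (#|S| <= p)%N by rewrite -[p in (_ <= p)%N]card_ord max_card.
have Lambda_ge0 y : (0 <= (Lambda X Y bstar y)%:E)%E by rewrite lee_fin expR_ge0.
rewrite -prod_laplace_dens_supp EFinM.
apply: le_trans (prior_int_ge_slab lam_gt0 S pi_ge0 Lambda_ge0).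
apply: lee_wpmul2l; first by rewrite lee_fin divr_ge0 ?pi_ge0.
have -> : ssize bstar = size (enum S) by rewrite -cardE.
apply: slab_int_ge_l1ball => //; first exact: enum_uniq.
move=> y y_off y_l1; rewrite lee_fin; apply: Lambda_ge_l1ball y_l1 => i i_off.
by move: (i_off); rewrite y_off ?mem_enum // mxE inE negbK => /eqP ->.
Qed.

End likelihood_prior.

Lemma ball_factor_ge (R : realType) (p s : nat) (lam c rho : R) :
  (2 <= p)%N -> (s <= p)%N -> 0 <= c * rho <= 1 -> lam * rho = p%:R^-1 ->
  expR (-1) / p%:R ^+ (2 * s) <=
  'C(p, s)%:R^-1 * (expR (- (c ^+ 2 * rho ^+ 2 / 2)) * (lam / 2) ^+ s
                    * expR (- (lam * rho)) * ((2 * rho) ^+ s / s`!%:R)).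
Proof.
move=> p_ge2 s_le /andP[c_rho_ge0 c_rho_le1] lam_rho.
set q : R := p%:R.
have q_ge2 : 2 <= q by rewrite ler_nat.
have q_ge0 : 0 <= q by lra.
have exp_ge : expR (-1) <= expR (- (c ^+ 2 * rho ^+ 2 / 2)) * expR (- (lam * rho)).
  rewrite -expRD ler_expR lam_rho -exprMn.
  have : q^-1 <= 2^-1 by rewrite lef_pV2 ?posrE //; lra.
  by nra.
have vol : (lam / 2) ^+ s * (2 * rho) ^+ s = q^-1 ^+ s.
  by rewrite -exprMn -lam_rho; congr (_ ^+ _); field.
have bin_fact : 'C(p, s)%:R * s`!%:R <= q ^+ s.
  by rewrite -natrM -natrX ler_nat bin_ffact ffact_leq_expn.
rewrite (_ : 'C(p, s)%:R^-1 * _ =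
    (expR (- (c ^+ 2 * rho ^+ 2 / 2)) * expR (- (lam * rho)))
    * ((lam / 2) ^+ s * (2 * rho) ^+ s) / ('C(p, s)%:R * s`!%:R)); last first.
  by rewrite invfM; ring.
rewrite vol mul2n -addnn exprD exprVn invfM mulrA.
apply: ler_pM; rewrite ?mulr_ge0 ?invr_ge0 ?exprn_ge0 ?expR_ge0 //.
  by rewrite ler_wpM2r ?invr_ge0 ?exprn_ge0.
by rewrite lef_pV2 ?posrE ?exprn_gt0 ?mulr_gt0 ?ltr0n ?fact_gt0 ?bin_gt0 //; exact: leq_trans p_ge2.
Qed.

Theorem lemma2 (R : realType) :
  exists P0 : nat, forall p : nat, (P0 <= p)%N ->
  forall (n : nat) (X : 'M[R]_(n, p)) (lam : R) (pi : nat -> R)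
         (bstar : 'cV[R]_p) (Y : 'cV[R]_n),
    0 < lam ->
    colnorm X / p%:R <= lam ->
    lam <= 4 * colnorm X * Num.sqrt (ln p%:R) ->
    (forall s : nat, (s <= p)%N -> 0 <= pi s) ->
    \sum_(s < p.+1) pi s = 1 ->
    ((pi (ssize bstar) / p%:R ^+ (2 * ssize bstar)
        * expR (- (lam * l1norm bstar)) * expR (-1))%:E
     <= prior_int lam pi (fun beta => (Lambda X Y bstar beta)%:E))%E.
Proof.
exists 2%N => p p_ge2 n X lam pi bstar Y lam_gt0 lam_ge _ pi_ge0 _.
set s := ssize bstar; set rho := (lam * p%:R)^-1.
have p_gt0 : 0 < p%:R :> R by rewrite ltr0n; exact: leq_trans p_ge2.
have rho_gt0 : 0 < rho by rewrite invr_gt0 mulr_gt0.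
have s_le : (s <= p)%N by rewrite -[p in (_ <= p)%N]card_ord max_card.
apply: le_trans _ (prior_int_Lambda_ge X Y bstar lam_gt0 (ltW rho_gt0) pi_ge0).
rewrite lee_fin -/s.
have lam_rho : lam * rho = p%:R^-1 by rewrite /rho invfM mulrA divff ?mul1r // gt_eqF.
have c_rho : 0 <= colnorm X * rho <= 1.
  rewrite mulr_ge0 ?colnorm_ge0 ?(ltW rho_gt0) //= /rho invfM mulrA mulrAC.
  by rewrite ler_pdivrMr // mul1r.
have := ball_factor_ge p_ge2 s_le c_rho lam_rho.
set M := expR (- (_ * rho ^+ 2 / 2)); set L := (lam / 2) ^+ s.
set e := expR (- (lam * rho)); set V := (2 * rho) ^+ s / _.
set C := 'C(p, s)%:R; set Q := p%:R ^+ _; set E := expR (- (lam * l1norm bstar)).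
have -> : pi s / C * (M * (L * E) * e * V) = pi s * E * (C^-1 * (M * L * e * V)) by ring.
have -> : pi s / Q * E * expR (-1) = pi s * E * (expR (-1) / Q) by ring.
by move=> ball; rewrite ler_wpM2l // mulr_ge0 ?pi_ge0 ?expR_ge0.
Qed.
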